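(* Let $\vartheta$ be a primitive semi-compatible random substitution with topological entropy $s$. Then \[ s\;\leqslant\;\frac{1}{\lambda-1}\bm q_1^\intercal\bm R . \]
   Context: Let $\mathcal A=\{a_1,\dots,a_n\}$ be a finite alphabet, $\mathcal A^+$ the finite non-empty words over $\mathcal A$. A random substitution is a map $\vartheta$ from $\mathcal A$ to finite non-empty subsets of $\mathcal A^+$, extended to words by $\vartheta(u_1\cdots u_m)=\{w_1\cdots w_m: w_k\in\vartheta(u_k)\}$ and to sets of words by unions; powers $\vartheta^m$ are compositions. $|u|_a$ is the number of occurrences of letter $a$ in $u$; $\Phi(u)=(|u|_{a_1},\dots,|u|_{a_n})^\intercal$. $\vartheta$ is semi-compatible if for each $a$ all words in $\vartheta(a)$ have the same $\Phi$. Substitution matrix $M_{ij}=|u|_{a_i}$, $u\in\vartheta(a_j)$; primitive means $M$ primitive, with Perron–Frobenius eigenvalue $\lambda$ and right PF eigenvector $\bm R$ normalised by $\|\bm R\|_1=1$. $\bm q_1=(\log\#\vartheta(a_1),\dots,\log\#\vartheta(a_n))^\intercal$. The language $\mathcal L$ is the set of all subwords of words in $\vartheta^m(a)$, $a\in\mathcal A$, $m\in\mathbb N$; $\mathcal L_\ell$ its words of length $\ell$; the topological entropy is $s=\lim_{\ell\to\infty}\frac1\ell\log\#\mathcal L_\ell$ (the topological entropy of the associated subshift). *)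

From Stdlib Require Import Reals List Arith Lia.
Import ListNotations.
Open Scope R_scope.

(* Alphabet A = {0, ..., n-1}; words are lists of letters.
   A random substitution is  theta : nat -> list (list nat), where theta a
   lists (without repetition) the finitely many words of vartheta(a). *)

Definition letter_count (w : list nat) (i : nat) : nat := count_occ Nat.eq_dec w i.

Definition is_random_subst (n : nat) (theta : nat -> list (list nat)) : Prop :=
  forall a, (a < n)%nat ->
    theta a <> nil /\ NoDup (theta a) /\
    forall w, In w (theta a) -> w <> nil /\ forall b, In b w -> (b < n)%nat.

Inductive subst_word (theta : nat -> list (list nat)) : list nat -> list nat -> Prop :=
| sw_nil : subst_word theta nil nil
| sw_cons : forall a u v w, In v (theta a) -> subst_word theta u w ->
    subst_word theta (a :: u) (v ++ w).

Inductive subst_pow (theta : nat -> list (list nat)) : nat -> list nat -> list nat -> Prop :=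
| sp_zero : forall u, subst_pow theta 0 u u
| sp_succ : forall m u v w, subst_pow theta m u v -> subst_word theta v w ->
    subst_pow theta (S m) u w.

Definition semi_compatible (n : nat) (theta : nat -> list (list nat)) : Prop :=
  forall a, (a < n)%nat -> forall u v, In u (theta a) -> In v (theta a) ->
    forall i, letter_count u i = letter_count v i.

(* substitution matrix M_{ij} = |u|_{a_i}, u in theta(a_j)
   (well defined by semi-compatibility; we use the first listed word) *)
Definition subst_matrix (theta : nat -> list (list nat)) (i j : nat) : nat :=
  letter_count (hd nil (theta j)) i.

Definition nsum (n : nat) (f : nat -> nat) : nat := fold_right Nat.add 0%nat (map f (seq 0 n)).
Definition rsum (n : nat) (f : nat -> R) : R := fold_right Rplus 0 (map f (seq 0 n)).

Definition mmul (n : nat) (A B : nat -> nat -> nat) (i j : nat) : nat :=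
  nsum n (fun k => (A i k * B k j)%nat).

Fixpoint mpow (n : nat) (A : nat -> nat -> nat) (k : nat) : nat -> nat -> nat :=
  match k with
  | O => fun i j => if Nat.eqb i j then 1%nat else 0%nat
  | S k' => mmul n (mpow n A k') A
  end.

Definition primitive_matrix (n : nat) (A : nat -> nat -> nat) : Prop :=
  exists k, (1 <= k)%nat /\ forall i j, (i < n)%nat -> (j < n)%nat -> (0 < mpow n A k i j)%nat.

(* lambda is the Perron-Frobenius eigenvalue of A with right PF eigenvector Rv
   normalised by ||Rv||_1 = 1 (for a primitive matrix: the unique eigenvector
   with strictly positive entries, up to scaling) *)
Definition PF_right_eigen (n : nat) (A : nat -> nat -> nat) (lam : R) (Rv : nat -> R) : Prop :=
  (forall i, (i < n)%nat -> 0 < Rv i) /\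
  rsum n Rv = 1 /\
  forall i, (i < n)%nat -> rsum n (fun j => INR (A i j) * Rv j) = lam * Rv i.

Definition in_language (n : nat) (theta : nat -> list (list nat)) (w : list nat) : Prop :=
  exists a m u p q, (a < n)%nat /\ subst_pow theta m [a] u /\ u = p ++ w ++ q.

Definition has_card (P : list nat -> Prop) (k : nat) : Prop :=
  exists l : list (list nat), NoDup l /\ (forall w, In w l <-> P w) /\ length l = k.

(* Fix a level m and let A and L be the minimal and maximal lengths of the
   level-m blocks theta^m(b). A legal word of length l > L lies in a window
   of consecutive blocks theta^m(b_1) ... theta^m(b_k) of total length at most
   l + 2L, so it is determined by the word b_1 ... b_k (with k <= (l + 2L)/A),
   the realisation of each block and an offset. By semi-compatibility the
   number of realisations of theta^m(b) is exactly exp (sum_{j<m} q_1 . M^j e_b),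
   while |theta^m(b)| = 1 . M^m e_b. Since M^j e_b / lambda^j converges to a
   multiple of R (a Doeblin contraction argument, using primitivity), the ratio
   of the two is at most q_1 . R / (lambda - 1) + eps for large m, and this
   gives s <= ln (n + 1) / A + q_1 . R / (lambda - 1) + eps, with A as large as
   we like. If lambda = 1 the block lengths stay bounded, the language is
   finite and s = 0, which is also the right-hand side since / 0 = 0. *)

From Stdlib Require Import Reals List Arith Lia Lra.
Import ListNotations.
Open Scope R_scope.

Lemma nsum_S n f : nsum (S n) f = (nsum n f + f n)%nat.
Proof.
  unfold nsum. rewrite seq_S, map_app, fold_right_app. simpl.
  induction (map f (seq 0 n)); simpl; lia.
Qed.

Lemma rsum_S n f : rsum (S n) f = rsum n f + f n.
Proof.
  unfold rsum. rewrite seq_S, map_app, fold_right_app. simpl.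
  induction (map f (seq 0 n)); simpl; lra.
Qed.

Lemma nsum_ext n f g : (forall i, (i < n)%nat -> f i = g i) -> nsum n f = nsum n g.
Proof.
  induction n; intros H; [reflexivity|].
  rewrite !nsum_S, IHn, H; auto; intros; apply H; lia.
Qed.

Lemma rsum_ext n f g : (forall i, (i < n)%nat -> f i = g i) -> rsum n f = rsum n g.
Proof.
  induction n; intros H; [reflexivity|].
  rewrite !rsum_S, IHn, H; auto; intros; apply H; lia.
Qed.

Lemma nsum_plus n f g : nsum n (fun i => f i + g i)%nat = (nsum n f + nsum n g)%nat.
Proof. induction n; [reflexivity|]. rewrite !nsum_S, IHn. lia. Qed.

Lemma rsum_plus n f g : rsum n (fun i => f i + g i) = rsum n f + rsum n g.
Proof. induction n; [unfold rsum; simpl; lra|]. rewrite !rsum_S, IHn. lra. Qed.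

Lemma rsum_minus n f g : rsum n (fun i => f i - g i) = rsum n f - rsum n g.
Proof. induction n; [unfold rsum; simpl; lra|]. rewrite !rsum_S, IHn. lra. Qed.

Lemma rsum_scal n k f : rsum n (fun i => k * f i) = k * rsum n f.
Proof. induction n; [unfold rsum; simpl; lra|]. rewrite !rsum_S, IHn. lra. Qed.

Lemma rsum_scalr n k f : rsum n (fun i => f i * k) = rsum n f * k.
Proof. induction n; [unfold rsum; simpl; lra|]. rewrite !rsum_S, IHn. lra. Qed.

Lemma rsum_const n k : rsum n (fun _ => k) = INR n * k.
Proof. induction n; [unfold rsum; simpl; lra|]. rewrite !rsum_S, IHn, S_INR. lra. Qed.

Lemma rsum_le n f g : (forall i, (i < n)%nat -> f i <= g i) -> rsum n f <= rsum n g.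
Proof.
  induction n; intros H; [unfold rsum; simpl; lra|]. rewrite !rsum_S.
  apply Rplus_le_compat; [apply IHn; intros|]; apply H; lia.
Qed.

Lemma rsum_nonneg n f : (forall i, (i < n)%nat -> 0 <= f i) -> 0 <= rsum n f.
Proof.
  intros H. replace 0 with (rsum n (fun _ => 0)) by (rewrite rsum_const; lra).
  apply rsum_le; auto.
Qed.

Lemma rsum_term_le n f i :
  (forall j, (j < n)%nat -> 0 <= f j) -> (i < n)%nat -> f i <= rsum n f.
Proof.
  induction n; intros H Hi; [lia|]. rewrite rsum_S.
  assert (0 <= rsum n f) by (apply rsum_nonneg; intros; apply H; lia).
  assert (0 <= f n) by (apply H; lia).
  destruct (Nat.eq_dec i n) as [->|]; [lra|].
  assert (f i <= rsum n f) by (apply IHn; [intros; apply H|]; lia). lra.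
Qed.

Lemma nsum_term_le n f i : (i < n)%nat -> (f i <= nsum n f)%nat.
Proof.
  induction n; intros Hi; [lia|]. rewrite nsum_S.
  destruct (Nat.eq_dec i n) as [->|]; [lia|]. specialize (IHn ltac:(lia)). lia.
Qed.

Lemma rsum_swap n m f :
  rsum n (fun i => rsum m (fun j => f i j)) = rsum m (fun j => rsum n (fun i => f i j)).
Proof.
  induction n.
  - transitivity (rsum m (fun _ => 0)); [rewrite rsum_const; unfold rsum; simpl; lra|].
    apply rsum_ext; reflexivity.
  - rewrite rsum_S, IHn, <- rsum_plus. apply rsum_ext. intros. rewrite rsum_S. reflexivity.
Qed.

Lemma rsum_delta n a f : (a < n)%nat ->
  rsum n (fun i => (if Nat.eq_dec a i then 1 else 0) * f i) = f a.
Proof.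
  induction n; intros H; [lia|]. rewrite rsum_S.
  destruct (Nat.eq_dec a n) as [->|]; [|rewrite IHn by lia; lra].
  replace (rsum n (fun i => (if Nat.eq_dec n i then 1 else 0) * f i)) with (rsum n (fun _ => 0)).
  - rewrite rsum_const. lra.
  - apply rsum_ext. intros. destruct (Nat.eq_dec n i); [lia|lra].
Qed.

Lemma nsum_delta n a f : (a < n)%nat ->
  nsum n (fun i => f i * (if Nat.eq_dec a i then 1 else 0))%nat = f a.
Proof.
  induction n; intros H; [lia|]. rewrite nsum_S.
  destruct (Nat.eq_dec a n) as [->|]; [|rewrite IHn by lia; lia].
  replace (nsum n (fun i => f i * (if Nat.eq_dec n i then 1 else 0))%nat)
    with (nsum n (fun _ => 0%nat)) by (apply nsum_ext; intros; destruct (Nat.eq_dec n i); lia).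
  enough (nsum n (fun _ => 0%nat) = 0%nat) by lia.
  clear. induction n; [reflexivity|]. rewrite nsum_S. lia.
Qed.

Lemma INR_nsum n f : INR (nsum n f) = rsum n (fun i => INR (f i)).
Proof. induction n; [reflexivity|]. rewrite nsum_S, rsum_S, plus_INR, IHn. reflexivity. Qed.

Lemma rsum_convex_bounds n (wt g : nat -> R) lo hi :
  (forall c, (c < n)%nat -> 0 <= wt c) -> rsum n wt = 1 ->
  (forall c, (c < n)%nat -> lo <= g c <= hi) -> lo <= rsum n (fun c => wt c * g c) <= hi.
Proof.
  intros Hw Hsum Hg.
  replace lo with (rsum n wt * lo) by (rewrite Hsum; ring).
  replace hi with (rsum n wt * hi) by (rewrite Hsum; ring).
  rewrite <- !rsum_scalr. split; apply rsum_le; intros c Hc;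
    apply Rmult_le_compat_l; auto; apply Hg; auto.
Qed.

(* Splitting off the uniform part [kap] of the weights: the remaining mass
   [1 - n kap] is all that can see the spread [hi - lo] of [g]. *)
Lemma rsum_doeblin_bounds n (wt g : nat -> R) kap lo hi :
  (forall c, (c < n)%nat -> kap <= wt c) -> rsum n wt = 1 ->
  (forall c, (c < n)%nat -> lo <= g c <= hi) ->
  (1 - INR n * kap) * lo + kap * rsum n g <= rsum n (fun c => wt c * g c)
  <= (1 - INR n * kap) * hi + kap * rsum n g.
Proof.
  intros Hw Hsum Hg.
  replace (rsum n (fun c => wt c * g c))
    with (rsum n (fun c => (wt c - kap) * g c) + kap * rsum n g)
    by (rewrite <- rsum_scal, <- rsum_plus; apply rsum_ext; intros; ring).
  replace (1 - INR n * kap) with (rsum n (fun c => wt c - kap))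
    by (rewrite rsum_minus, rsum_const, Hsum; ring).
  rewrite <- !rsum_scalr.
  assert (rsum n (fun c => (wt c - kap) * lo) <= rsum n (fun c => (wt c - kap) * g c)
          <= rsum n (fun c => (wt c - kap) * hi)).
  { split; apply rsum_le; intros c Hc; apply Rmult_le_compat_l;
      try (specialize (Hw c Hc); lra); apply Hg; auto. }
  lra.
Qed.

Lemma ln_le x y : 0 < x -> x <= y -> ln x <= ln y.
Proof.
  intros Hx Hxy. destruct (Rle_lt_or_eq_dec _ _ Hxy) as [H| ->]; [|lra].
  left. apply ln_increasing; auto.
Qed.

Lemma exp_le x y : x <= y -> exp x <= exp y.
Proof.
  intros Hxy. destruct (Rle_lt_or_eq_dec _ _ Hxy) as [H| ->]; [|lra].
  left. apply exp_increasing; auto.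
Qed.

Lemma finite_min_pos n (f : nat -> R) : (forall c, (c < n)%nat -> 0 < f c) ->
  exists d, 0 < d /\ forall c, (c < n)%nat -> d <= f c.
Proof.
  induction n; intros H; [exists 1; split; [lra|intros; lia]|].
  destruct IHn as (d & Hd & Hle); [intros; apply H; lia|].
  exists (Rmin d (f n)). split; [apply Rmin_pos; auto; apply H; lia|].
  intros c Hc. destruct (Nat.eq_dec c n) as [->|]; [apply Rmin_r|].
  eapply Rle_trans; [apply Rmin_l|apply Hle; lia].
Qed.

Lemma INR_mpow_0 n M a c : INR (mpow n M 0 a c) = if Nat.eq_dec a c then 1 else 0.
Proof.
  simpl. destruct (Nat.eq_dec a c) as [->|Hac]; [rewrite Nat.eqb_refl; reflexivity|].
  apply Nat.eqb_neq in Hac. rewrite Hac. reflexivity.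
Qed.

Lemma INR_mpow_S n M k a d :
  INR (mpow n M (S k) a d) = rsum n (fun c => INR (mpow n M k a c) * INR (M c d)).
Proof. simpl mpow. unfold mmul. rewrite INR_nsum. apply rsum_ext. intros. apply mult_INR. Qed.

Fixpoint mpow_col (n : nat) (M : nat -> nat -> nat) (m b : nat) : nat -> nat :=
  match m with
  | O => fun a => if Nat.eq_dec b a then 1%nat else 0%nat
  | S m' => fun a => nsum n (fun c => (M a c * mpow_col n M m' b c)%nat)
  end.

Definition col_len n M m b : nat := nsum n (mpow_col n M m b).

Definition col_weight n M (q : nat -> R) m b : R :=
  rsum n (fun a => INR (mpow_col n M m b a) * q a).

Fixpoint cum_weight n M (q : nat -> R) m b : R :=
  match m with
  | O => 0
  | S m' => cum_weight n M q m' b + col_weight n M q m' b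
  end.

Lemma PF_eigenvalue_ge_1 n M lam Rv :
  (forall c, (c < n)%nat -> (1 <= nsum n (fun a => M a c))%nat) ->
  PF_right_eigen n M lam Rv -> 1 <= lam.
Proof.
  intros Hcol (HR & Hsum & Heig).
  assert (E : lam = rsum n (fun c => INR (nsum n (fun a => M a c)) * Rv c)).
  { transitivity (rsum n (fun a => rsum n (fun c => INR (M a c) * Rv c))).
    - rewrite (rsum_ext _ _ (fun a => lam * Rv a)) by (intros; apply Heig; auto).
      rewrite rsum_scal, Hsum. ring.
    - rewrite rsum_swap. apply rsum_ext. intros. rewrite INR_nsum, rsum_scalr. reflexivity. }
  rewrite E, <- Hsum. apply rsum_le. intros c Hc.
  pose proof (le_INR _ _ (Hcol c Hc)). pose proof (HR c Hc). simpl in *. nra.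
Qed.

(* The Doeblin-type argument: normalised by [lam^j R_a], the columns [M^j e_b]
   evolve by averaging against the stochastic weights [pf_weight], and
   primitivity makes [p] steps of that averaging contract the spread by
   [pf_contraction < 1]. *)
Section Perron_Frobenius.

Variables (n : nat) (M : nat -> nat -> nat) (lam : R) (Rv : nat -> R).
Hypothesis Hn : (1 <= n)%nat.
Hypothesis HPF : PF_right_eigen n M lam Rv.
Hypothesis Hlam : 0 < lam.
Variable p : nat.
Hypothesis Hpos : forall i j, (i < n)%nat -> (j < n)%nat -> (0 < mpow n M p i j)%nat.
Variable del : R.
Hypothesis Hdel : 0 < del.
Hypothesis Hdel_le : forall c, (c < n)%nat -> del <= Rv c.
Variable q : nat -> R.
Hypothesis Hq : forall a, (a < n)%nat -> 0 <= q a.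

Let Hlam_pow i : 0 < lam ^ i := pow_lt lam i Hlam.

Lemma Rv_pos a : (a < n)%nat -> 0 < Rv a.
Proof. apply HPF. Qed.

Lemma Rv_le_1 a : (a < n)%nat -> Rv a <= 1.
Proof.
  destruct HPF as (HR & Hsum & _). intros Ha. rewrite <- Hsum.
  apply rsum_term_le; auto. intros; left; auto.
Qed.

Lemma rsum_mpow_Rv k a : (a < n)%nat ->
  rsum n (fun c => INR (mpow n M k a c) * Rv c) = lam ^ k * Rv a.
Proof.
  revert a. induction k; intros a Ha.
  - rewrite (rsum_ext _ _ (fun c => (if Nat.eq_dec a c then 1 else 0) * Rv c))
      by (intros; rewrite INR_mpow_0; auto).
    rewrite rsum_delta; auto. simpl. ring.
  - rewrite (rsum_ext _ _ (fun d => rsum n (fun c => INR (mpow n M k a c) * INR (M c d) * Rv d)))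
      by (intros; rewrite INR_mpow_S, rsum_scalr; reflexivity).
    rewrite rsum_swap.
    rewrite (rsum_ext _ _ (fun c => lam * (INR (mpow n M k a c) * Rv c))).
    + rewrite rsum_scal, IHk by auto. simpl. ring.
    + intros c Hc. destruct HPF as (_ & _ & Heig).
      rewrite (rsum_ext _ _ (fun d => INR (mpow n M k a c) * (INR (M c d) * Rv d)))
        by (intros; ring).
      rewrite rsum_scal, Heig by auto. ring.
Qed.

Definition pf_weight k a c : R := INR (mpow n M k a c) * Rv c / (lam ^ k * Rv a).

Lemma pf_weight_sum k a : (a < n)%nat -> rsum n (pf_weight k a) = 1.
Proof.
  intros Ha. unfold pf_weight, Rdiv. rewrite rsum_scalr, rsum_mpow_Rv by auto.
  pose proof (Rv_pos a Ha). pose proof (Hlam_pow k). field. lra.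
Qed.

Lemma pf_weight_nonneg k a c : (a < n)%nat -> (c < n)%nat -> 0 <= pf_weight k a c.
Proof.
  intros Ha Hc. pose proof (Rv_pos a Ha). pose proof (Rv_pos c Hc). pose proof (Hlam_pow k).
  apply Rle_mult_inv_pos; [|nra]. apply Rmult_le_pos; [apply pos_INR|lra].
Qed.

Definition pf_doeblin : R := del / lam ^ p.
Definition pf_contraction : R := 1 - INR n * pf_doeblin.

Lemma pf_doeblin_pos : 0 < pf_doeblin.
Proof. apply Rdiv_lt_0_compat; auto. Qed.

Lemma pf_doeblin_le a c : (a < n)%nat -> (c < n)%nat -> pf_doeblin <= pf_weight p a c.
Proof.
  intros Ha Hc. pose proof (Rv_pos a Ha). pose proof (Rv_le_1 a Ha). pose proof (Hdel_le c Hc).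
  pose proof (Hlam_pow p). pose proof (le_INR _ _ (Hpos a c Ha Hc)) as Hm. simpl in Hm.
  assert (E : pf_weight p a c - pf_doeblin
             = (INR (mpow n M p a c) * Rv c - del * Rv a) / (lam ^ p * Rv a))
    by (unfold pf_weight, pf_doeblin; field; lra).
  assert (0 <= (INR (mpow n M p a c) * Rv c - del * Rv a) / (lam ^ p * Rv a))
    by (apply Rle_mult_inv_pos; nra).
  lra.
Qed.

Lemma pf_contraction_range : 0 <= pf_contraction < 1.
Proof.
  unfold pf_contraction. pose proof pf_doeblin_pos.
  assert (1 <= INR n) by (apply (le_INR 1); auto).
  assert (Hsum : rsum n (fun _ => pf_doeblin) <= rsum n (pf_weight p 0))
    by (apply rsum_le; intros; apply pf_doeblin_le; lia).
  rewrite rsum_const, pf_weight_sum in Hsum by lia. nra.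
Qed.

Definition pf_pairing : R := rsum n (fun a => q a * Rv a).

Lemma pf_pairing_nonneg : 0 <= pf_pairing.
Proof. apply rsum_nonneg. intros a Ha. pose proof (Rv_pos a Ha). pose proof (Hq a Ha). nra. Qed.

Section Column.

Variable b : nat.
Hypothesis Hb : (b < n)%nat.

Lemma mpow_col_add j k a : (a < n)%nat ->
  INR (mpow_col n M (j + k) b a)
  = rsum n (fun c => INR (mpow n M k a c) * INR (mpow_col n M j b c)).
Proof.
  revert j a. induction k; intros j a Ha.
  - rewrite Nat.add_0_r.
    rewrite (rsum_ext _ _ (fun c => (if Nat.eq_dec a c then 1 else 0) * INR (mpow_col n M j b c)))
      by (intros; rewrite INR_mpow_0; auto).
    rewrite rsum_delta; auto.
  - replace (j + S k)%nat with (S j + k)%nat by lia. rewrite IHk by auto.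
    rewrite (rsum_ext _ (fun d => INR (mpow n M (S k) a d) * INR (mpow_col n M j b d))
       (fun d => rsum n (fun c => INR (mpow n M k a c) * INR (M c d) * INR (mpow_col n M j b d))))
      by (intros; rewrite INR_mpow_S, rsum_scalr; reflexivity).
    rewrite rsum_swap. apply rsum_ext. intros c Hc. simpl mpow_col.
    rewrite INR_nsum, <- rsum_scal. apply rsum_ext. intros. rewrite mult_INR. ring.
Qed.

Definition scaled_col j a : R := INR (mpow_col n M j b a) / (lam ^ j * Rv a).

Lemma mpow_col_scaled j a : (a < n)%nat ->
  INR (mpow_col n M j b a) = lam ^ j * Rv a * scaled_col j a.
Proof. intros Ha. unfold scaled_col. pose proof (Rv_pos a Ha). pose proof (Hlam_pow j). field. lra. Qed.

Lemma scaled_col_add j k a : (a < n)%nat ->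
  scaled_col (j + k) a = rsum n (fun c => pf_weight k a c * scaled_col j c).
Proof.
  intros Ha. unfold scaled_col at 1. rewrite mpow_col_add by auto.
  unfold Rdiv. rewrite <- rsum_scalr. apply rsum_ext. intros c Hc.
  unfold pf_weight, scaled_col. pose proof (Rv_pos a Ha). pose proof (Rv_pos c Hc).
  pose proof (Hlam_pow j). pose proof (Hlam_pow k). rewrite pow_add. field. lra.
Qed.

Definition col_bounds j lo hi : Prop := forall a, (a < n)%nat -> lo <= scaled_col j a <= hi.

Lemma col_bounds_add j k lo hi : col_bounds j lo hi -> col_bounds (j + k) lo hi.
Proof.
  intros H a Ha. rewrite scaled_col_add by auto.
  apply rsum_convex_bounds; auto using pf_weight_sum. intros; apply pf_weight_nonneg; auto.
Qed.

Lemma col_bounds_all j : col_bounds j 0 (/ del).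
Proof.
  replace j with (0 + j)%nat by lia. apply col_bounds_add.
  intros a Ha. unfold scaled_col. pose proof (Rv_pos a Ha). pose proof (Hdel_le a Ha).
  simpl. destruct (Nat.eq_dec b a); simpl INR; rewrite Rmult_1_l; unfold Rdiv.
  - rewrite Rmult_1_l. split; [left; apply Rinv_0_lt_compat; lra|apply Rinv_le_contravar; auto].
  - rewrite Rmult_0_l. split; [lra|left; apply Rinv_0_lt_compat; lra].
Qed.

Lemma col_bounds_p : col_bounds p (/ lam ^ p) (/ del).
Proof.
  intros a Ha. split; [|apply col_bounds_all; auto].
  unfold scaled_col. change (mpow_col n M p b a) with (mpow_col n M (0 + p) b a).
  rewrite mpow_col_add by auto.
  rewrite (rsum_ext _ _ (fun c => (if Nat.eq_dec b c then 1 else 0) * INR (mpow n M p a c)))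
    by (intros; simpl; destruct (Nat.eq_dec b i); simpl; ring).
  rewrite rsum_delta by auto.
  pose proof (Rv_pos a Ha). pose proof (Rv_le_1 a Ha). pose proof (Hlam_pow p).
  pose proof (le_INR _ _ (Hpos a b Ha Hb)) as Hm. simpl in Hm.
  assert (E : INR (mpow n M p a b) / (lam ^ p * Rv a) - / lam ^ p
              = (INR (mpow n M p a b) - Rv a) / (lam ^ p * Rv a)) by (field; lra).
  assert (0 <= (INR (mpow n M p a b) - Rv a) / (lam ^ p * Rv a)) by (apply Rle_mult_inv_pos; nra).
  lra.
Qed.

Lemma col_bounds_contract k : exists lo hi,
  col_bounds (p + k * p) lo hi /\ / lam ^ p <= lo /\ hi - lo <= pf_contraction ^ k / del.
Proof.
  induction k.
  - exists (/ lam ^ p), (/ del). rewrite Nat.mul_0_l, Nat.add_0_r.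
    pose proof (Rinv_0_lt_compat _ (Hlam_pow p)). unfold Rdiv. simpl.
    split; [apply col_bounds_p|split; lra].
  - destruct IHk as (lo & hi & Hbnd & Hlo & Hspread).
    set (j := (p + k * p)%nat). set (S0 := rsum n (scaled_col j)).
    exists (pf_contraction * lo + pf_doeblin * S0), (pf_contraction * hi + pf_doeblin * S0).
    assert (HS : INR n * lo <= S0) by (unfold S0; rewrite <- rsum_const; apply rsum_le; apply Hbnd).
    pose proof pf_doeblin_pos. pose proof pf_contraction_range.
    split; [|split].
    + intros a Ha. replace (p + S k * p)%nat with (j + p)%nat by (unfold j; simpl; lia).
      rewrite scaled_col_add by auto. unfold pf_contraction.
      apply rsum_doeblin_bounds; auto using pf_weight_sum. intros; apply pf_doeblin_le; auto.
    + unfold pf_contraction in *. nra.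
    + simpl. unfold Rdiv in *. nra.
Qed.

Lemma col_weight_le j lo hi : col_bounds j lo hi -> col_weight n M q j b <= lam ^ j * hi * pf_pairing.
Proof.
  intros H. unfold col_weight, pf_pairing. rewrite <- rsum_scal. apply rsum_le. intros a Ha.
  rewrite mpow_col_scaled by auto.
  pose proof (Rv_pos a Ha). pose proof (Hq a Ha). pose proof (Hlam_pow j). specialize (H a Ha).
  assert (0 <= lam ^ j * Rv a * q a) by (apply Rmult_le_pos; [apply Rmult_le_pos|]; lra).
  nra.
Qed.

Lemma col_len_bounds m lo hi : col_bounds m lo hi ->
  lam ^ m * lo <= INR (col_len n M m b) <= lam ^ m * hi.
Proof.
  intros H. unfold col_len. rewrite INR_nsum. destruct HPF as (_ & Hsum & _).
  replace (lam ^ m * lo) with (rsum n (fun a => lam ^ m * Rv a * lo)) by (rewrite rsum_scalr, rsum_scal, Hsum; ring).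
  replace (lam ^ m * hi) with (rsum n (fun a => lam ^ m * Rv a * hi)) by (rewrite rsum_scalr, rsum_scal, Hsum; ring).
  split; apply rsum_le; intros a Ha; rewrite mpow_col_scaled by auto;
    pose proof (Rv_pos a Ha); pose proof (Hlam_pow m); specialize (H a Ha);
    apply Rmult_le_compat_l; nra.
Qed.

Lemma cum_weight_tail j0 h : 1 < lam -> 0 <= h ->
  (forall j, (j0 <= j)%nat -> col_weight n M q j b <= lam ^ j * h * pf_pairing) ->
  forall m, (j0 <= m)%nat ->
  cum_weight n M q m b <= cum_weight n M q j0 b + pf_pairing * h * lam ^ m / (lam - 1).
Proof.
  intros Hlam1 Hh H m Hm. pose proof pf_pairing_nonneg.
  induction Hm as [|m Hm IH].
  - enough (0 <= pf_pairing * h * lam ^ j0 / (lam - 1)) by lra.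
    apply Rle_mult_inv_pos; [|lra]. pose proof (Hlam_pow j0). apply Rmult_le_pos; nra.
  - simpl cum_weight. specialize (H m ltac:(lia)). simpl pow.
    replace (pf_pairing * h * (lam * lam ^ m) / (lam - 1))
      with (pf_pairing * h * lam ^ m / (lam - 1) + lam ^ m * h * pf_pairing) by (field; lra).
    lra.
Qed.

Lemma cum_weight_le_ratio eps K N lo hi : 1 < lam -> 0 < eps ->
  col_bounds (p + K * p) lo hi -> / lam ^ p <= lo ->
  pf_pairing / (lam - 1) * (hi - lo) <= eps / (2 * lam ^ p) ->
  pf_pairing / (lam - 1) / del <= eps * lam ^ N / (2 * lam ^ p) ->
  let m := (p + K * p + N)%nat in
  cum_weight n M q m b <= (pf_pairing / (lam - 1) + eps) * INR (col_len n M m b)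
  /\ lam ^ N <= INR (col_len n M m b).
Proof.
  intros Hlam1 Heps Hbnd Hlo Hspread Hhead m.
  set (m1 := (p + K * p)%nat) in *. set (C := pf_pairing / (lam - 1)) in *.
  set (t := lam ^ m / lam ^ p).
  pose proof pf_pairing_nonneg. pose proof (Hlam_pow p). pose proof (Hlam_pow N).
  pose proof (Hlam_pow m1).
  assert (HC : 0 <= C) by (apply Rle_mult_inv_pos; lra).
  assert (Hlo_pos : 0 < lo) by (pose proof (Rinv_0_lt_compat _ (Hlam_pow p)); lra).
  assert (Hm : lam ^ m = lam ^ m1 * lam ^ N) by apply pow_add.
  assert (Ht : t = lam ^ m1 / lam ^ p * lam ^ N) by (unfold t; rewrite Hm; field; lra).
  assert (Hm1 : 1 <= lam ^ m1 / lam ^ p).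
  { unfold m1. rewrite pow_add. replace (lam ^ p * lam ^ (K * p) / lam ^ p) with (lam ^ (K * p))
      by (field; lra). apply pow_R1_Rle. lra. }
  assert (Hlen : t <= INR (col_len n M m b)).
  { eapply Rle_trans; [|apply (col_len_bounds m lo hi); apply col_bounds_add; auto].
    unfold t, Rdiv. apply Rmult_le_compat_l; auto. rewrite Hm. nra. }
  split; [|nra].
  assert (Hhead_cum : cum_weight n M q m1 b <= C / del * lam ^ m1).
  { replace (C / del * lam ^ m1) with (0 + pf_pairing * / del * lam ^ m1 / (lam - 1))
      by (unfold C; field; lra).
    apply (cum_weight_tail 0 (/ del)); [auto| |intros j _|lia].
    - left. apply Rinv_0_lt_compat. lra.
    - apply (col_weight_le j 0). apply col_bounds_all. }
  assert (Htail_cum : cum_weight n M q m b <= cum_weight n M q m1 b + C * hi * lam ^ m).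
  { replace (C * hi * lam ^ m) with (pf_pairing * hi * lam ^ m / (lam - 1)) by (unfold C; field; lra).
    apply (cum_weight_tail m1 hi); [auto| |intros j Hj|unfold m; lia].
    - specialize (Hbnd 0%nat ltac:(lia)). lra.
    - apply (col_weight_le j lo). replace j with (m1 + (j - m1))%nat by lia.
      apply col_bounds_add; auto. }
  assert (Hhead_le : C / del * lam ^ m1 <= eps / 2 * t).
  { rewrite Ht. replace (eps / 2 * (lam ^ m1 / lam ^ p * lam ^ N))
      with (eps * lam ^ N / (2 * lam ^ p) * lam ^ m1) by (field; lra).
    apply Rmult_le_compat_r; lra. }
  assert (Htail_le : C * hi * lam ^ m <= C * INR (col_len n M m b) + eps / 2 * t).
  { replace (C * hi * lam ^ m) with (C * (lam ^ m * lo) + C * (hi - lo) * lam ^ m) by ring.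
    assert (C * (lam ^ m * lo) <= C * INR (col_len n M m b)).
    { apply Rmult_le_compat_l; auto. apply (col_len_bounds m lo hi). apply col_bounds_add; auto. }
    replace (eps / 2 * t) with (eps / (2 * lam ^ p) * lam ^ m) by (unfold t; field; lra).
    assert (C * (hi - lo) * lam ^ m <= eps / (2 * lam ^ p) * lam ^ m)
      by (apply Rmult_le_compat_r; [pose proof (Hlam_pow m)|]; lra).
    lra. }
  nra.
Qed.

Lemma col_len_le m : INR (col_len n M m b) <= lam ^ m / del.
Proof. apply (col_len_bounds m 0 (/ del)), col_bounds_all. Qed.

End Column.

Lemma cum_weight_le_ratio_eventually eps A : 1 < lam -> 0 < eps -> exists m,
  forall b, (b < n)%nat ->
  cum_weight n M q m b <= (pf_pairing / (lam - 1) + eps) * INR (col_len n M m b)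
  /\ (A <= col_len n M m b)%nat.
Proof.
  intros Hlam1 Heps. set (C := pf_pairing / (lam - 1)).
  pose proof pf_pairing_nonneg. pose proof (Hlam_pow p). pose proof pf_contraction_range.
  assert (HC : 0 <= C) by (apply Rle_mult_inv_pos; lra).
  (* [K] contraction steps make the spread of the normalised columns
     negligible, then [N] more levels make the first [p + K p] ones negligible. *)
  set (y := eps / (2 * lam ^ p) * del / (C + 1)).
  assert (Hy : 0 < y)
    by (unfold y; apply Rdiv_lt_0_compat; [apply Rmult_lt_0_compat; [apply Rdiv_lt_0_compat|]|]; lra).
  destruct (pow_lt_1_zero pf_contraction ltac:(rewrite Rabs_pos_eq; lra) y Hy) as (K & HK).
  specialize (HK K (le_n K)). rewrite Rabs_pos_eq in HK by (apply pow_le; lra).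
  set (G := 2 * lam ^ p * C / (del * eps)).
  assert (HG : 0 <= G) by (apply Rle_mult_inv_pos; [|apply Rmult_lt_0_compat]; nra).
  destruct (Pow_x_infinity lam ltac:(rewrite Rabs_pos_eq; lra) (INR A + G)) as (N & HN).
  specialize (HN N (le_n N)). rewrite Rabs_pos_eq in HN by (apply pow_le; lra).
  exists (p + K * p + N)%nat. intros b Hb.
  destruct (col_bounds_contract b Hb K) as (lo & hi & Hbnd & Hlo & Hspread).
  assert (Hspread' : C * (hi - lo) <= eps / (2 * lam ^ p)).
  { apply Rle_trans with (C * (pf_contraction ^ K / del)); [apply Rmult_le_compat_l; auto|].
    replace (eps / (2 * lam ^ p)) with ((C + 1) * y / del) by (unfold y; field; lra).
    unfold Rdiv. rewrite <- Rmult_assoc.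
    apply Rmult_le_compat_r; [left; apply Rinv_0_lt_compat; auto|].
    assert (0 <= pf_contraction ^ K) by (apply pow_le; lra). nra. }
  assert (Hhead : C / del <= eps * lam ^ N / (2 * lam ^ p)).
  { assert (G <= lam ^ N) by (pose proof (pos_INR A); lra).
    replace (C / del) with (G * (eps / (2 * lam ^ p))) by (unfold G; field; lra).
    replace (eps * lam ^ N / (2 * lam ^ p)) with (lam ^ N * (eps / (2 * lam ^ p))) by (field; lra).
    apply Rmult_le_compat_r; auto. apply Rle_mult_inv_pos; lra. }
  destruct (cum_weight_le_ratio b Hb eps K N lo hi Hlam1 Heps Hbnd Hlo Hspread' Hhead)
    as [Hratio Hlen].
  split; auto. apply INR_le. pose proof (pos_INR A). lra.
Qed.

End Perron_Frobenius.

Fixpoint subst_list (psi : nat -> list (list nat)) (v : list nat) : list (list nat) :=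
  match v with
  | [] => [[]]
  | a :: u => flat_map (fun x => map (fun w => x ++ w) (subst_list psi u)) (psi a)
  end.

Lemma length_subst_list_cons psi a u :
  length (subst_list psi (a :: u)) = (length (psi a) * length (subst_list psi u))%nat.
Proof. simpl. induction (psi a); simpl; [reflexivity|]. rewrite length_app, length_map, IHl. lia. Qed.

Lemma letter_count_cons a v j :
  letter_count (a :: v) j = ((if Nat.eq_dec a j then 1 else 0) + letter_count v j)%nat.
Proof.
  unfold letter_count. destruct (Nat.eq_dec a j).
  - rewrite count_occ_cons_eq by auto. lia.
  - rewrite count_occ_cons_neq by auto. lia.
Qed.

Lemma letter_count_app u v j : letter_count (u ++ v) j = (letter_count u j + letter_count v j)%nat.
Proof. apply count_occ_app. Qed.

Definition word_over (n : nat) (w : list nat) : Prop := forall b, In b w -> (b < n)%nat.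

Lemma word_over_cons n a w : word_over n (a :: w) -> (a < n)%nat /\ word_over n w.
Proof. intros H. split; [|intros b Hb]; apply H; simpl; auto. Qed.

Lemma length_letter_count n w : word_over n w -> length w = nsum n (letter_count w).
Proof.
  induction w as [|a w IH]; intros H.
  - simpl. induction n; [reflexivity|]. rewrite nsum_S, <- IHn; [reflexivity|intros b []].
  - apply word_over_cons in H as [Ha Hw]. change (length (a :: w)) with (S (length w)).
    rewrite (nsum_ext _ _ (fun j => ((if Nat.eq_dec a j then 1 else 0) + letter_count w j)%nat))
      by (intros; apply letter_count_cons).
    rewrite nsum_plus, IH by auto.
    enough (nsum n (fun j => if Nat.eq_dec a j then 1%nat else 0%nat) = 1%nat) by lia.
    transitivity (nsum n (fun j => (1 * if Nat.eq_dec a j then 1 else 0)%nat));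
      [apply nsum_ext; intros; lia|apply (nsum_delta n a (fun _ => 1%nat) Ha)].
Qed.


Definition blocks_word (bs : list (nat * list nat)) : list nat := concat (map snd bs).

Lemma blocks_word_cons x bs : blocks_word (x :: bs) = snd x ++ blocks_word bs.
Proof. reflexivity. Qed.

Lemma blocks_word_app bs1 bs2 : blocks_word (bs1 ++ bs2) = blocks_word bs1 ++ blocks_word bs2.
Proof. unfold blocks_word. rewrite map_app, concat_app. reflexivity. Qed.

Lemma length_blocks_word_ge A bs : (forall x, In x bs -> (A <= length (snd x))%nat) ->
  (A * length bs <= length (blocks_word bs))%nat.
Proof.
  induction bs as [|x bs IH]; intros H; simpl; [lia|]. rewrite blocks_word_cons, length_app.
  assert (A <= length (snd x))%nat by (apply H; simpl; auto).
  assert (A * length bs <= length (blocks_word bs))%nat by (apply IH; intros; apply H; simpl; auto).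
  lia.
Qed.

Lemma blocks_trim_front L bs p r : blocks_word bs = p ++ r ->
  (forall x, In x bs -> (length (snd x) <= L)%nat) ->
  exists pre bs' p', bs = pre ++ bs' /\ blocks_word bs' = p' ++ r /\ (length p' <= L)%nat.
Proof.
  revert p. induction bs as [|x bs IH]; intros p H HL.
  - exists [], [], p. destruct p; simpl in *; [repeat split; auto; lia|discriminate].
  - destruct (Nat.le_gt_cases (length p) L) as [Hp|Hp]; [exists [], (x :: bs), p; auto|].
    rewrite blocks_word_cons in H. apply app_eq_app in H as (l & [[E1 E2]|[E1 E2]]).
    + assert (Hx : (length (snd x) <= L)%nat) by (apply HL; simpl; auto).
      rewrite E1, length_app in Hx. lia.
    + destruct (IH l E2) as (pre & bs' & p' & -> & F2 & F3); [intros; apply HL; simpl; auto|].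
      exists (x :: pre), bs', p'. auto.
Qed.

Lemma blocks_trim_back L bs r s : blocks_word bs = r ++ s ->
  (forall x, In x bs -> (length (snd x) <= L)%nat) ->
  exists bs' post s', bs = bs' ++ post /\ blocks_word bs' = r ++ s' /\ (length s' <= L)%nat.
Proof.
  revert s. induction bs as [|x bs IH] using rev_ind; intros s H HL.
  - exists [], [], s. destruct r, s; simpl in *; try discriminate. repeat split; auto; lia.
  - destruct (Nat.le_gt_cases (length s) L) as [Hs|Hs].
    + exists (bs ++ [x]), [], s. rewrite app_nil_r. auto.
    + rewrite blocks_word_app in H. unfold blocks_word at 2 in H. simpl in H.
      rewrite app_nil_r in H. apply app_eq_app in H as (l & [[E1 E2]|[E1 E2]]).
      * destruct (IH l E1) as (bs' & post & s' & -> & F2 & F3);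
          [intros; apply HL; apply in_or_app; auto|].
        exists bs', (post ++ [x]), s'. rewrite app_assoc. auto.
      * assert (Hx : (length (snd x) <= L)%nat) by (apply HL; apply in_or_app; simpl; auto).
        rewrite E2, length_app in Hx. lia.
Qed.

Fixpoint words_of_length (n j : nat) : list (list nat) :=
  match j with
  | O => [[]]
  | S j' => flat_map (fun a => map (cons a) (words_of_length n j')) (seq 0 n)
  end.

Lemma words_of_length_spec n j v : In v (words_of_length n j) <-> length v = j /\ word_over n v.
Proof.
  revert v. induction j; intros v; simpl.
  - split; [intros [<-|[]]; split; [reflexivity|intros b []]|].
    intros [Hv _]. destruct v; [auto|discriminate].
  - rewrite in_flat_map. split.
    + intros (a & Ha & Hv). apply in_map_iff in Hv as (w & <- & Hw). apply IHj in Hw as [Hw1 Hw2].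
      apply in_seq in Ha. split; [simpl; auto|]. intros b [<-|Hb]; [lia|auto].
    + intros [Hv Hov]. destruct v as [|a w]; [discriminate|]. apply word_over_cons in Hov as [Ha Hw].
      exists a. split; [apply in_seq; lia|]. apply in_map. apply IHj. simpl in Hv. auto.
Qed.

Lemma length_words_of_length n j : length (words_of_length n j) = (n ^ j)%nat.
Proof.
  induction j; simpl; [reflexivity|].
  rewrite (flat_map_constant_length (c := (n ^ j)%nat)), length_seq; [reflexivity|].
  intros. rewrite length_map. auto.
Qed.

Definition words_upto (n k : nat) : list (list nat) := flat_map (words_of_length n) (seq 0 (S k)).

Lemma length_words_upto n k : (length (words_upto n k) <= S n ^ k)%nat.
Proof.
  induction k; unfold words_upto in *; [simpl; lia|].
  rewrite seq_S, flat_map_app, length_app.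
  replace (flat_map (words_of_length n) [(0 + S k)%nat]) with (words_of_length n (S k))
    by (cbn [flat_map]; rewrite app_nil_r; reflexivity).
  rewrite length_words_of_length.
  assert (n ^ k <= S n ^ k)%nat by (apply Nat.pow_le_mono_l; lia).
  rewrite (Nat.pow_succ_r' n k), (Nat.pow_succ_r' (S n) k). nia.
Qed.

Lemma words_upto_spec n k v : In v (words_upto n k) <-> (length v <= k)%nat /\ word_over n v.
Proof.
  unfold words_upto. rewrite in_flat_map. split.
  - intros (j & Hj & Hv). apply in_seq in Hj. apply words_of_length_spec in Hv as [<- Hv]. split; auto; lia.
  - intros [Hk Hv]. exists (length v). rewrite in_seq, words_of_length_spec. split; auto; lia.
Qed.

Lemma length_flat_map_le {A B} (g : A -> list B) (l : list A) (K : R) :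
  (forall x, In x l -> INR (length (g x)) <= K) -> INR (length (flat_map g l)) <= INR (length l) * K.
Proof.
  induction l as [|x l IH]; intros H; [simpl; lra|].
  cbn [flat_map length]. rewrite length_app, plus_INR, S_INR.
  assert (INR (length (g x)) <= K) by (apply H; simpl; auto).
  assert (INR (length (flat_map g l)) <= INR (length l) * K) by (apply IH; intros; apply H; simpl; auto).
  lra.
Qed.
Section Substitution.

Variables (n : nat) (theta : nat -> list (list nat)).
Hypothesis Hsub : is_random_subst n theta.
Hypothesis Hsc : semi_compatible n theta.
Let M := subst_matrix theta.

Lemma subst_word_in_list u w : subst_word theta u w -> In w (subst_list theta u).
Proof.
  induction 1; simpl; [auto|]. apply in_flat_map. exists v. split; auto. apply in_map; auto.
Qed.

Lemma subst_word_app u1 u2 w : subst_word theta (u1 ++ u2) w ->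
  exists w1 w2, w = w1 ++ w2 /\ subst_word theta u1 w1 /\ subst_word theta u2 w2.
Proof.
  revert w. induction u1 as [|a u1 IH]; intros w H.
  - exists [], w. repeat split; auto. constructor.
  - inversion H as [|a0 u0 v0 w0 Hin Hsw]; subst.
    destruct (IH _ Hsw) as (w1 & w2 & -> & Hw1 & Hw2).
    exists (v0 ++ w1), w2. rewrite app_assoc. repeat split; auto. constructor; auto.
Qed.

Lemma subst_pow_add r m u x :
  subst_pow theta (r + m) u x -> exists y, subst_pow theta r u y /\ subst_pow theta m y x.
Proof.
  revert x. induction m; intros x H.
  - rewrite Nat.add_0_r in H. exists x. split; auto. constructor.
  - rewrite Nat.add_succ_r in H. inversion H as [|m0 u0 v0 w0 H1 H2]; subst.
    destruct (IHm v0 H1) as (y & Hy1 & Hy2). exists y. split; auto. econstructor; eauto.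
Qed.

Fixpoint subst_pow_list (m : nat) (u : list nat) : list (list nat) :=
  match m with O => [u] | S m' => flat_map (subst_list theta) (subst_pow_list m' u) end.

Lemma subst_pow_in_list m u x : subst_pow theta m u x -> In x (subst_pow_list m u).
Proof.
  induction 1; simpl; [auto|]. apply in_flat_map. exists v. split; auto.
  apply subst_word_in_list; auto.
Qed.

(* Semi-compatibility is what makes every word of [theta(a)] have the letter
   counts of the column [a] of [subst_matrix theta] (which uses the first word). *)
Lemma subst_list_letter_count v z : In z (subst_list theta v) -> word_over n v ->
  word_over n z /\ forall i, letter_count z i = nsum n (fun j => (M i j * letter_count v j)%nat).
Proof.
  revert z. induction v as [|a v IH]; intros z Hz Hv.
  - destruct Hz as [<-|[]]. split; [intros b []|]. intros i. clear.
    induction n as [|k IHk]; [reflexivity|]. rewrite nsum_S, <- IHk. unfold letter_count. simpl. lia.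
  - apply in_flat_map in Hz as (x & Hx & Hz). apply in_map_iff in Hz as (w & <- & Hw).
    apply word_over_cons in Hv as [Ha Hv].
    destruct (IH w Hw Hv) as [Hw1 Hw2]. destruct (Hsub a Ha) as (Hne & _ & Hwd). split.
    + intros b Hb. apply in_app_or in Hb as [Hb|Hb]; auto. apply (proj2 (Hwd x Hx)); auto.
    + intros i. rewrite letter_count_app, Hw2.
      rewrite (nsum_ext _ (fun j => (M i j * letter_count (a :: v) j)%nat)
        (fun j => (M i j * (if Nat.eq_dec a j then 1 else 0) + M i j * letter_count v j)%nat))
        by (intros; rewrite letter_count_cons; lia).
      rewrite nsum_plus, nsum_delta by auto. f_equal. unfold M, subst_matrix.
      apply (Hsc a Ha x (hd [] (theta a))); auto. destruct (theta a); [congruence|simpl; auto].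
Qed.

Lemma subst_pow_list_letter_count m b y : (b < n)%nat -> In y (subst_pow_list m [b]) ->
  word_over n y /\ forall i, letter_count y i = mpow_col n M m b i.
Proof.
  intros Hb. revert y. induction m; intros y Hy.
  - destruct Hy as [<-|[]]. split; [intros c [<-|[]]; auto|].
    intros i. rewrite letter_count_cons. simpl. destruct (Nat.eq_dec b i); lia.
  - apply in_flat_map in Hy as (z & Hz & Hy).
    destruct (IHm z Hz) as [Hz1 Hz2]. destruct (subst_list_letter_count z y Hy Hz1) as [Hy1 Hy2].
    split; auto. intros i. rewrite Hy2. apply nsum_ext. intros. rewrite Hz2. reflexivity.
Qed.

Lemma word_over_subst_pow m u x : subst_pow theta m u x -> word_over n u -> word_over n x.
Proof.
  induction 1; auto. intros Hu.
  apply (subst_list_letter_count v); auto using subst_word_in_list.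
Qed.

Lemma length_subst_pow m b x : (b < n)%nat -> subst_pow theta m [b] x -> length x = col_len n M m b.
Proof.
  intros Hb H. apply subst_pow_in_list in H.
  destruct (subst_pow_list_letter_count m b x Hb H) as [Hx Hcount].
  rewrite (length_letter_count n x Hx). apply nsum_ext. auto.
Qed.

Definition log_choices (a : nat) : R := ln (INR (length (theta a))).

Lemma length_theta_pos a : (a < n)%nat -> (0 < length (theta a))%nat.
Proof. intros Ha. destruct (Hsub a Ha) as (Hne & _). destruct (theta a); simpl; [congruence|lia]. Qed.

Lemma log_choices_nonneg a : (a < n)%nat -> 0 <= log_choices a.
Proof.
  intros Ha. unfold log_choices. rewrite <- ln_1.
  apply ln_le; [lra|]. apply (le_INR 1), length_theta_pos; auto.
Qed.

Lemma length_subst_list v : word_over n v ->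
  INR (length (subst_list theta v)) = exp (rsum n (fun a => INR (letter_count v a) * log_choices a)).
Proof.
  induction v as [|a v IH]; intros Hv.
  - simpl. rewrite <- exp_0. f_equal.
    transitivity (rsum n (fun _ => 0)); [rewrite rsum_const; lra|].
    apply rsum_ext. intros. simpl. ring.
  - apply word_over_cons in Hv as [Ha Hv].
    rewrite length_subst_list_cons, mult_INR, IH by auto.
    rewrite (rsum_ext _ (fun j => INR (letter_count (a :: v) j) * log_choices j)
                       (fun j => (if Nat.eq_dec a j then 1 else 0) * log_choices j
                                   + INR (letter_count v j) * log_choices j))
      by (intros j _; rewrite letter_count_cons, plus_INR; destruct (Nat.eq_dec a j); simpl; lra).
    rewrite rsum_plus, rsum_delta, exp_plus by auto. f_equal.
    unfold log_choices. rewrite exp_ln by (apply lt_0_INR, length_theta_pos; auto). reflexivity.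
Qed.

Lemma length_subst_pow_list m b : (b < n)%nat ->
  INR (length (subst_pow_list m [b])) = exp (cum_weight n M log_choices m b).
Proof.
  intros Hb. induction m; [simpl; rewrite exp_0; reflexivity|].
  simpl subst_pow_list. simpl cum_weight. rewrite exp_plus, <- IHm.
  assert (H : forall L, incl L (subst_pow_list m [b]) ->
    INR (length (flat_map (subst_list theta) L)) = INR (length L) * exp (col_weight n M log_choices m b)).
  { induction L as [|y L IHL]; intros HL; [simpl; lra|].
    simpl flat_map. rewrite length_app, plus_INR, IHL by (intros x Hx; apply HL; simpl; auto).
    destruct (subst_pow_list_letter_count m b y Hb) as [Hy1 Hy2]; [apply HL; simpl; auto|].
    rewrite length_subst_list by auto. unfold col_weight. simpl length. rewrite S_INR.
    rewrite (rsum_ext _ (fun a => INR (letter_count y a) * log_choices a)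
      (fun a => INR (mpow_col n M m b a) * log_choices a)) by (intros; rewrite Hy2; reflexivity).
    lra. }
  apply H, incl_refl.
Qed.

Lemma subst_word_blocks m bs w : subst_word theta (blocks_word bs) w ->
  (forall x, In x bs -> subst_pow theta m [fst x] (snd x)) ->
  exists bs', map fst bs' = map fst bs /\ blocks_word bs' = w
    /\ forall x, In x bs' -> subst_pow theta (S m) [fst x] (snd x).
Proof.
  revert w. induction bs as [|x bs IH]; intros w H Hbs.
  - inversion H; subst. exists []. repeat split; auto. intros x [].
  - rewrite blocks_word_cons in H. apply subst_word_app in H as (w1 & w2 & -> & H1 & H2).
    destruct (IH w2 H2) as (bs' & E1 & E2 & E3); [intros; apply Hbs; simpl; auto|].
    exists ((fst x, w1) :: bs'). simpl. rewrite E1, blocks_word_cons, E2. repeat split; auto.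
    intros z [<-|Hz]; auto. simpl. econstructor; [apply Hbs; simpl; auto|auto].
Qed.

Lemma subst_pow_blocks m y x : subst_pow theta m y x ->
  exists bs, map fst bs = y /\ blocks_word bs = x
    /\ forall z, In z bs -> subst_pow theta m [fst z] (snd z).
Proof.
  induction 1 as [u|m u v w Hv IH Hw].
  - exists (map (fun b => (b, [b])) u). rewrite map_map. split; [apply map_id|split].
    + induction u as [|a u IHu]; [reflexivity|]. simpl. rewrite blocks_word_cons, IHu. reflexivity.
    + intros z Hz. apply in_map_iff in Hz as (b & <- & _). constructor.
  - destruct IH as (bs & <- & <- & Hbs). destruct (subst_word_blocks m bs w Hw Hbs) as (bs' & E & ?).
    exists bs'. rewrite E. auto.
Qed.

Definition pow_words (m b : nat) : list (list nat) := subst_pow_list m [b].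

Lemma blocks_in_subst_list m bs : (forall z, In z bs -> subst_pow theta m [fst z] (snd z)) ->
  In (blocks_word bs) (subst_list (pow_words m) (map fst bs)).
Proof.
  induction bs as [|x bs IH]; intros H; simpl; [auto|].
  rewrite blocks_word_cons. apply in_flat_map. exists (snd x). split.
  - apply subst_pow_in_list, H. simpl. auto.
  - apply (in_map (fun w => snd x ++ w)), IH. intros; apply H; simpl; auto.
Qed.

Definition block_len (m : nat) (v : list nat) : nat := list_sum (map (fun b => col_len n M m b) v).

Lemma block_len_blocks m bs : (forall z, In z bs -> (fst z < n)%nat) ->
  (forall z, In z bs -> subst_pow theta m [fst z] (snd z)) ->
  block_len m (map fst bs) = length (blocks_word bs).
Proof.
  induction bs as [|x bs IH]; intros Hn Hbs; [reflexivity|].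
  unfold block_len in *. simpl.
  rewrite blocks_word_cons, length_app, IH by (intros; first [apply Hn|apply Hbs]; simpl; auto).
  rewrite (length_subst_pow m (fst x) (snd x)); auto; [apply Hn|apply Hbs]; simpl; auto.
Qed.

Lemma length_subst_list_pow_words m K v : word_over n v -> 0 <= K ->
  (forall b, (b < n)%nat -> cum_weight n M log_choices m b <= K * INR (col_len n M m b)) ->
  INR (length (subst_list (pow_words m) v)) <= exp (K * INR (block_len m v)).
Proof.
  intros Hv HK Hcum. induction v as [|a v IH]; [simpl; rewrite Rmult_0_r, exp_0; lra|].
  apply word_over_cons in Hv as [Ha Hv].
  change (block_len m (a :: v)) with (col_len n M m a + block_len m v)%nat.
  rewrite length_subst_list_cons, mult_INR, plus_INR, Rmult_plus_distr_l, exp_plus.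
  apply Rmult_le_compat; try apply pos_INR; auto.
  unfold pow_words. rewrite length_subst_pow_list by auto. apply exp_le. auto.
Qed.

Lemma subst_matrix_col_sum_ge_1 c : (c < n)%nat -> (1 <= nsum n (fun a => M a c))%nat.
Proof.
  intros Hc. destruct (Hsub c Hc) as (Hne & _ & Hw).
  unfold M, subst_matrix. destruct (theta c) as [|w ws]; [congruence|].
  destruct (Hw w ltac:(simpl; auto)) as (Hw1 & Hw2).
  transitivity (length w); [destruct w; [congruence|simpl; lia]|].
  rewrite (length_letter_count n w Hw2). apply Nat.eq_le_incl, nsum_ext. reflexivity.
Qed.

Section Window.

Variables (m A L : nat).
Hypothesis HL : forall b j, (b < n)%nat -> (j <= m)%nat -> (col_len n M j b <= L)%nat.
Hypothesis HA : forall b, (b < n)%nat -> (A <= col_len n M m b)%nat.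

(* A legal word longer than [L] cannot sit inside [theta^j(a)] with [j <= m],
   so it sits inside [theta^m(y)] for a legal [y]; cutting the blocks of
   [theta^m(y)] that meet it gives a window of at most [l + 2L] letters. *)
Lemma legal_word_window l u : (L < l)%nat -> length u = l -> in_language n theta u ->
  exists v z i, word_over n v /\ (A * length v <= l + 2 * L)%nat /\ (block_len m v <= l + 2 * L)%nat
    /\ In z (subst_list (pow_words m) v) /\ (i <= L)%nat /\ u = firstn l (skipn i z).
Proof.
  intros Hl Hu (a & m' & x & p & r & Ha & Hx & ->).
  assert (Hm : (m < m')%nat).
  { destruct (Nat.le_gt_cases m' m) as [Hle|]; auto. exfalso.
    pose proof (length_subst_pow m' a _ Ha Hx). pose proof (HL a m' Ha Hle).
    rewrite !length_app in *. lia. }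
  replace m' with ((m' - m) + m)%nat in Hx by lia.
  destruct (subst_pow_add _ _ _ _ Hx) as (y & Hy & Hyx).
  assert (Hyn : word_over n y) by (apply (word_over_subst_pow _ _ _ Hy); intros b [<-|[]]; auto).
  destruct (subst_pow_blocks _ _ _ Hyx) as (bs & <- & Ebs & Hbs).
  assert (Hbn : forall z, In z bs -> (fst z < n)%nat) by (intros z Hz; apply Hyn, in_map; auto).
  assert (Hblen : forall z, In z bs -> length (snd z) = col_len n M m (fst z))
    by (intros; apply length_subst_pow; auto).
  assert (HbL : forall z, In z bs -> (length (snd z) <= L)%nat)
    by (intros; rewrite Hblen; auto).
  destruct (blocks_trim_front L bs p (u ++ r) Ebs HbL) as (pre & bs2 & p' & -> & E2 & Hp').
  rewrite app_assoc in E2.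
  destruct (blocks_trim_back L bs2 (p' ++ u) r E2) as (bs1 & post & r' & -> & E1 & Hr');
    [intros; apply HbL; apply in_or_app; auto|].
  assert (Hsub1 : forall z, In z bs1 -> In z (pre ++ bs1 ++ post))
    by (intros; apply in_or_app; right; apply in_or_app; auto).
  assert (Hlen : length (blocks_word bs1) = (length p' + l + length r')%nat)
    by (rewrite E1, !length_app; lia).
  exists (map fst bs1), (blocks_word bs1), (length p'). repeat split.
  - intros b Hb. apply in_map_iff in Hb as (z & <- & Hz). auto.
  - rewrite length_map. enough (A * length bs1 <= length (blocks_word bs1))%nat by lia.
    apply length_blocks_word_ge. intros. rewrite Hblen; auto.
  - rewrite block_len_blocks; auto. lia.
  - apply blocks_in_subst_list. auto.
  - auto.
  - rewrite E1, <- app_assoc, skipn_app, skipn_all, Nat.sub_diag, skipn_O, <- Hu. simpl.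
    rewrite firstn_app, Nat.sub_diag. simpl. rewrite app_nil_r, firstn_all. reflexivity.
Qed.

Lemma language_count_le K l c : (1 <= A)%nat -> 0 <= K ->
  (forall b, (b < n)%nat -> cum_weight n M log_choices m b <= K * INR (col_len n M m b)) ->
  (L < l)%nat -> has_card (fun w => length w = l /\ in_language n theta w) c ->
  INR c <= INR (S n ^ ((l + 2 * L) / A)) * (INR (S L) * exp (K * INR (l + 2 * L))).
Proof.
  intros HA1 HK Hcum Hl (lw & Hnd & Hlw & <-).
  set (windows := filter (fun v => block_len m v <=? l + 2 * L) (words_upto n ((l + 2 * L) / A))).
  set (cands := flat_map (fun v => flat_map (fun z => map (fun i => firstn l (skipn i z)) (seq 0 (S L)))
                                          (subst_list (pow_words m) v)) windows).
  assert (Hincl : incl lw cands).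
  { intros u Hu. apply Hlw in Hu as [Hul Hu].
    destruct (legal_word_window l u Hl Hul Hu) as (v & z & i & Hv & HAv & Hbv & Hz & Hi & ->).
    apply in_flat_map. exists v. split.
    - apply filter_In. rewrite words_upto_spec, Nat.leb_le. repeat split; auto.
      apply Nat.div_le_lower_bound; lia.
    - apply in_flat_map. exists z. split; auto. apply in_map_iff. exists i. rewrite in_seq. split; [reflexivity|lia]. }
  eapply Rle_trans; [apply le_INR, (NoDup_incl_length Hnd Hincl)|]. unfold cands.
  eapply Rle_trans; [apply (length_flat_map_le _ _ (INR (S L) * exp (K * INR (l + 2 * L))))|].
  - intros v Hv. apply filter_In in Hv as [Hv Hbv]. rewrite words_upto_spec in Hv.
    apply Nat.leb_le in Hbv.
    rewrite (flat_map_constant_length (c := S L)) by (intros; rewrite length_map, length_seq; auto).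
    rewrite mult_INR, (Rmult_comm (INR (length _))). apply Rmult_le_compat_l; [apply pos_INR|].
    eapply Rle_trans; [apply (length_subst_list_pow_words m K v (proj2 Hv) HK Hcum)|].
    apply exp_le. apply Rmult_le_compat_l; [auto|apply le_INR; auto].
  - apply Rmult_le_compat_r; [apply Rmult_le_pos; [apply pos_INR|left; apply exp_pos]|].
    apply le_INR. eapply Nat.le_trans; [apply filter_length_le|apply length_words_upto].
Qed.

End Window.

Lemma language_empty L l c : (forall b j, (b < n)%nat -> (col_len n M j b <= L)%nat) ->
  (L < l)%nat -> has_card (fun w => length w = l /\ in_language n theta w) c -> c = 0%nat.
Proof.
  intros HL Hl (lw & _ & Hlw & <-). destruct lw as [|u lw]; auto. exfalso.
  destruct (proj1 (Hlw u) (or_introl eq_refl)) as (Hul & a & m & x & p & r & Ha & Hx & ->).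
  pose proof (length_subst_pow m a _ Ha Hx). pose proof (HL a m Ha).
  rewrite !length_app in *. lia.
Qed.

End Substitution.

Lemma Un_cv_le_of_bound u s al be l0 : Un_cv u s -> 0 <= al ->
  (forall l, (l0 <= l)%nat -> u l <= al / INR l + be) -> s <= be.
Proof.
  intros Hs Hal H. destruct (Rle_or_lt s be) as [|Hlt]; auto. exfalso.
  set (e := (s - be) / 2). assert (He : 0 < e) by (unfold e; lra).
  destruct (Hs e He) as (N1 & HN1). destruct (INR_unbounded (al / e)) as (N2 & HN2).
  set (l := (N1 + l0 + N2 + 1)%nat).
  specialize (HN1 l ltac:(unfold l; lia)). specialize (H l ltac:(unfold l; lia)).
  unfold R_dist in HN1. apply Rabs_def2 in HN1.
  assert (HlN : INR N2 + 1 <= INR l) by (rewrite <- S_INR; apply le_INR; unfold l; lia).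
  assert (Hl : 0 < INR l) by (pose proof (pos_INR N2); lra).
  assert (al / INR l < e).
  { apply (Rmult_lt_reg_r (INR l)); [lra|]. unfold Rdiv.
    rewrite Rmult_assoc, Rinv_l, Rmult_1_r by lra.
    apply (Rmult_lt_compat_r e) in HN2; auto. unfold Rdiv in HN2.
    rewrite Rmult_assoc, Rinv_l in HN2 by lra. nra. }
  unfold e in *. lra.
Qed.

Lemma exists_div_INR_le x eps : 0 < eps -> exists A, (1 <= A)%nat /\ x / INR A <= eps.
Proof.
  intros Heps. destruct (INR_unbounded (x / eps)) as (N & HN). exists (S N). split; [lia|].
  rewrite S_INR in *. pose proof (pos_INR N).
  apply (Rmult_le_reg_r (INR N + 1)); [lra|].
  replace (x / (INR N + 1) * (INR N + 1)) with x by (field; lra).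
  apply (Rmult_lt_compat_r eps) in HN; auto. unfold Rdiv in HN.
  rewrite Rmult_assoc, Rinv_l, Rmult_1_r in HN by lra. nra.
Qed.

Lemma ln_INR_nonneg k : (1 <= k)%nat -> 0 <= ln (INR k).
Proof. intros Hk. rewrite <- ln_1. apply ln_le; [lra|]. apply (le_INR 1); auto. Qed.

(* The junk value of [ln] outside its domain, which makes [ln (INR (c l))]
   harmless when there are no legal words of length [l]. *)
Lemma ln_0 : ln 0 = 0.
Proof. unfold ln. destruct (Rlt_dec 0 0) as [H|]; [destruct (Rlt_irrefl 0 H)|reflexivity]. Qed.

Lemma ln_INR_le c y : 0 < y -> 0 <= ln y -> INR c <= y -> ln (INR c) <= ln y.
Proof.
  intros Hy Hln Hc. destruct c as [|c].
  - simpl. rewrite ln_0. auto.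
  - apply ln_le; auto. apply lt_0_INR. lia.
Qed.

Section Entropy.

Variables (n : nat) (theta : nat -> list (list nat)).
Hypothesis Hsub : is_random_subst n theta.
Hypothesis Hsc : semi_compatible n theta.
Variables (c : nat -> nat) (s : R).
Hypothesis Hc : forall l, has_card (fun w => length w = l /\ in_language n theta w) (c l).
Hypothesis Hs : Un_cv (fun l => ln (INR (c l)) / INR l) s.
Let M := subst_matrix theta.

(* A legal word of length [l] is coded by the letters of its window (at most
   [(l + 2L) / A] of them, with [S n] choices each counting the window length),
   the blocks of the window ([K] nats per letter) and an offset. *)
Lemma entropy_le_block_ratio m A K : (1 <= A)%nat -> 0 <= K ->
  (forall b, (b < n)%nat -> cum_weight n M (log_choices theta) m b <= K * INR (col_len n M m b)) ->
  (forall b, (b < n)%nat -> (A <= col_len n M m b)%nat) ->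
  s <= ln (INR (S n)) / INR A + K.
Proof.
  intros HA1 HK Hcum HA.
  set (L := nsum n (fun b => nsum (S m) (fun j => col_len n M j b))).
  assert (HL : forall b j, (b < n)%nat -> (j <= m)%nat -> (col_len n M j b <= L)%nat).
  { intros b j Hb Hj. eapply Nat.le_trans; [|apply (nsum_term_le _ _ b Hb)].
    apply (nsum_term_le (S m) (fun j => col_len n M j b)). lia. }
  set (be := ln (INR (S n)) / INR A + K).
  assert (Hn0 : 0 <= ln (INR (S n))) by (apply ln_INR_nonneg; lia).
  assert (HA0 : 0 < INR A) by (apply lt_0_INR; lia).
  assert (Hbe : 0 <= be) by (unfold be; pose proof (Rle_mult_inv_pos _ _ Hn0 HA0); lra).
  assert (HL0 : 0 <= ln (INR (S L))) by (apply ln_INR_nonneg; lia).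
  apply (Un_cv_le_of_bound _ _ (ln (INR (S L)) + 2 * INR L * be) _ (S L) Hs).
  { pose proof (pos_INR L). nra. }
  intros l Hl. set (k := ((l + 2 * L) / A)%nat).
  pose proof (language_count_le n theta Hsub Hsc m A L HL HA K l (c l) HA1 HK Hcum ltac:(lia) (Hc l))
    as Hcount.
  fold k in Hcount.
  assert (Hpos : 0 < INR (S n ^ k)) by (apply lt_0_INR; apply Nat.neq_0_lt_0, Nat.pow_nonzero; lia).
  assert (Hln : ln (INR (S n ^ k) * (INR (S L) * exp (K * INR (l + 2 * L))))
                = INR k * ln (INR (S n)) + ln (INR (S L)) + K * INR (l + 2 * L)).
  { rewrite !ln_mult, ln_exp, pow_INR, ln_pow; auto using exp_pos; try (apply lt_0_INR; lia).
    - ring.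
    - apply Rmult_lt_0_compat; [apply lt_0_INR; lia|apply exp_pos]. }
  assert (Hk : INR k * ln (INR (S n)) <= INR (l + 2 * L) * (ln (INR (S n)) / INR A)).
  { assert (INR A * INR k <= INR (l + 2 * L))
      by (rewrite <- mult_INR; apply le_INR, Nat.Div0.mul_div_le).
    replace (INR (l + 2 * L) * (ln (INR (S n)) / INR A))
      with (INR (l + 2 * L) / INR A * ln (INR (S n))) by (field; lra).
    apply Rmult_le_compat_r; auto. apply (Rmult_le_reg_l (INR A)); auto.
    replace (INR A * (INR (l + 2 * L) / INR A)) with (INR (l + 2 * L)) by (field; lra). lra. }
  apply ln_INR_le in Hcount.
  2: { apply Rmult_lt_0_compat; auto. apply Rmult_lt_0_compat; [apply lt_0_INR; lia|apply exp_pos]. }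
  2: { rewrite Hln. pose proof (pos_INR k). pose proof (pos_INR (l + 2 * L)). nra. }
  rewrite Hln, plus_INR, mult_INR in *. simpl (INR 2) in *.
  assert (Hl0 : 0 < INR l) by (apply lt_0_INR; lia).
  apply (Rmult_le_reg_r (INR l)); auto. unfold Rdiv at 1 2.
  rewrite Rmult_plus_distr_r, !Rmult_assoc, Rinv_l, Rmult_1_r by lra.
  unfold be in *. nra.
Qed.

Lemma entropy_le_0_of_bounded L : (forall b j, (b < n)%nat -> (col_len n M j b <= L)%nat) -> s <= 0.
Proof.
  intros HL. apply (Un_cv_le_of_bound _ _ 0 0 (S L) Hs); [lra|]. intros l Hl.
  rewrite (language_empty n theta Hsub Hsc L l (c l) HL ltac:(lia) (Hc l)).
  simpl. rewrite ln_0. unfold Rdiv. lra.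
Qed.

End Entropy.

Theorem mainTheorem7
  (n : nat) (theta : nat -> list (list nat))
  (Hn : (1 <= n)%nat)
  (Hsub : is_random_subst n theta)
  (Hsc : semi_compatible n theta)
  (Hprim : primitive_matrix n (subst_matrix theta))
  (lam : R) (Rv : nat -> R)
  (HPF : PF_right_eigen n (subst_matrix theta) lam Rv)
  (c : nat -> nat)
  (Hc : forall l, has_card (fun w => length w = l /\ in_language n theta w) (c l))
  (s : R)
  (Hs : Un_cv (fun l => ln (INR (c l)) / INR l) s) :
  s <= / (lam - 1) * rsum n (fun a => ln (INR (length (theta a))) * Rv a).
Proof.
  destruct Hprim as (p & _ & Hpos).
  destruct (finite_min_pos n Rv (proj1 HPF)) as (del & Hdel & Hdel_le).
  assert (Hlam : 1 <= lam).
  { apply (PF_eigenvalue_ge_1 n (subst_matrix theta) lam Rv); auto.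
    apply subst_matrix_col_sum_ge_1; auto. }
  change (rsum n _) with (pf_pairing n Rv (log_choices theta)).
  pose proof (log_choices_nonneg n theta Hsub) as Hq.
  destruct (Rle_lt_or_eq_dec 1 lam Hlam) as [Hlam1| <-].
  - apply Rle_plus_epsilon. intros eps Heps.
    destruct (exists_div_INR_le (ln (INR (S n))) (eps / 2)) as (A & HA1 & HA); [lra|].
    destruct (cum_weight_le_ratio_eventually n _ lam Rv Hn HPF ltac:(lra) p Hpos del Hdel Hdel_le
                _ Hq (eps / 2) A Hlam1 ltac:(lra)) as (m & Hm).
    set (C := pf_pairing n Rv (log_choices theta) / (lam - 1)) in Hm.
    assert (HC : 0 <= C) by (apply Rle_mult_inv_pos; [apply (pf_pairing_nonneg n _ _ _ HPF _ Hq)|lra]).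
    pose proof (entropy_le_block_ratio n theta Hsub Hsc c s Hc Hs m A (C + eps / 2) HA1
                  ltac:(lra) (fun b Hb => proj1 (Hm b Hb)) (fun b Hb => proj2 (Hm b Hb))).
    unfold C, Rdiv in *. lra.
  - rewrite Rminus_diag, Rinv_0, Rmult_0_l.
    destruct (INR_unbounded (/ del)) as (L & HL).
    apply (entropy_le_0_of_bounded n theta Hsub Hsc c s Hc Hs L). intros b j Hb.
    pose proof (col_len_le n _ 1 Rv Hn HPF ltac:(lra) del Hdel Hdel_le b Hb j) as Hlen.
    rewrite pow1 in Hlen. apply INR_le. unfold Rdiv in Hlen. lra.
Qed.
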